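(* Let $G$ be a nice graph, $V_4$ the set of vertices of degree at least four in $G$, $\mathcal{P}$ a path partition of $G$, and $\mathcal{P}_4\subseteq\mathcal{P}$ the subfamily of paths that visit at least one vertex of $V_4$. Then $\mathcal{P}_4$ admits a terminal collection of size at most $16\cdot\mathsf{high}(G)$, where $\mathsf{high}(G)=\sum_{v\in V_4}\deg_G(v)$.
   Context: All graphs are finite, simple and undirected; subcubic means maximum degree at most $3$. A path partition of $G$ is a collection of pairwise edge-disjoint paths whose edge sets together cover $E(G)$. A pan cycle of $G$ is a cycle containing a unique vertex of degree $3$ in $G$, all other vertices of it having degree $2$ in $G$; a bull cycle is a cycle containing exactly two vertices of degree $3$ in $G$, all others having degree $2$ in $G$. $G$ is nice if it is connected, not subcubic, has no pan cycles, and all its bull cycles are triangles. $N_G[S]$ denotes the closed neighbourhood of $S$. For a family $\mathcal{Q}$ of edge-disjoint paths in $G$, a set $U\subseteq V(G)$ is a terminal collection for $\mathcal{Q}$ if (1) $N_G[V_4]\subseteq U$; (2) both endpoints of every $P\in\mathcal{Q}$ belong to $U$; (3) for all $u,v\in U$, if two distinct paths $P_1,P_2\in\mathcal{Q}$ both visit $u$ and $v$, then at least one of $P_1,P_2$ visits some other vertex $w\in U$ between $u$ and $v$. *)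

From mathcomp Require Import all_boot.
Set Implicit Arguments. Unset Strict Implicit. Unset Printing Implicit Defensive.

Section Graphs.
Variable T : finType.
Variable e : rel T.

Definition simple_graph := symmetric e /\ irreflexive e.

Definition deg (x : T) : nat := #|[set y | e x y]|.

Definition V4 : {set T} := [set v | 4 <= deg v].

Definition high : nat := \sum_(v in V4) deg v.

Definition connected_graph := forall x y : T, connect e x y.
Definition subcubic := forall v : T, deg v <= 3.

Definition is_cycle (c : seq T) : bool := [&& cycle e c, uniq c & 3 <= size c].

Definition num_deg3 (c : seq T) : nat := count (fun v => deg v == 3) c.
Definition others_deg2 (c : seq T) : bool :=
  all (fun v => (deg v == 2) || (deg v == 3)) c.

Definition pan_cycle (c : seq T) : bool :=
  [&& is_cycle c, num_deg3 c == 1 & others_deg2 c].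
Definition bull_cycle (c : seq T) : bool :=
  [&& is_cycle c, num_deg3 c == 2 & others_deg2 c].

Definition nice : Prop :=
  [/\ connected_graph, ~ subcubic,
      (forall c, ~~ pan_cycle c) &
      (forall c, bull_cycle c -> size c = 3)].

Definition is_gpath (p : seq T) : bool :=
  match p with
  | [::] => false
  | x :: s => [&& path e x s, uniq p & 1 <= size s]
  end.

Definition gedges : {set {set T}} :=
  [set E : {set T} | [exists x, exists y, e x y && (E == [set x; y])]].

Definition path_edges (p : seq T) : {set {set T}} :=
  [set E : {set T} | has (fun xy => E == [set xy.1; xy.2]) (zip p (behead p))].

Definition path_partition (P : seq (seq T)) : Prop :=
  [/\ (forall p, p \in P -> is_gpath p),
      (forall i j, i < size P -> j < size P -> i != j ->
         [disjoint path_edges (nth [::] P i) & path_edges (nth [::] P j)]) &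
      \bigcup_(p <- P) path_edges p = gedges].

Definition visits_V4 (p : seq T) : bool := has (fun v => v \in V4) p.

Definition closed_nbhd (S : {set T}) : {set T} :=
  [set x | [exists v, (v \in S) && ((x == v) || e v x)]].

Definition between (p : seq T) (u v w : T) : bool :=
  [&& w \in p, minn (index u p) (index v p) < index w p
             & index w p < maxn (index u p) (index v p)].

Definition endpoints_in (U : {set T}) (p : seq T) : bool :=
  match p with
  | [::] => true
  | x :: s => (x \in U) && (last x s \in U)
  end.

Definition terminal_collection (Q : seq (seq T)) (U : {set T}) : Prop :=
  [/\ closed_nbhd V4 \subset U,
      (forall p, p \in Q -> endpoints_in U p) &
      (forall u v, u \in U -> v \in U -> u != v ->
         forall i j, i < size Q -> j < size Q -> i != j ->
         let P1 := nth [::] Q i in let P2 := nth [::] Q j in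
         [&& u \in P1, v \in P1, u \in P2 & v \in P2] ->
         exists2 w, w \in U &
           [&& w != u, w != v & between P1 u v w || between P2 u v w])].
End Graphs.

(* Let Q be the paths of the partition that meet V4, S the union of V4 with the
   ends of the paths of Q, and U = N[S].  A vertex inside two edge-disjoint
   paths has two neighbours along each of them, all distinct, so it lies in V4;
   hence every vertex shared by two paths of Q is in S.  For u, v in S on both
   P1 and P2, on each path either uv is an edge or the successor of the earlier
   of u, v lies strictly between them and is a neighbour of u or v, hence in U;
   uv cannot be an edge of both paths.  For the size,
   |U| <= sum_(v in V4) (deg v + 1) + 4 |S \ V4| <= 2 high + 8 |Q|, and
   |Q| <= high because each path of Q contains an edge vy with v in V4 and
   distinct paths yield distinct darts (v, y). *)

From mathcomp Require Import all_boot zify.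
Set Implicit Arguments. Unset Strict Implicit. Unset Printing Implicit Defensive.

Lemma leq_card_bigcup (I : Type) (T : finType) (r : seq I) (P : pred I)
    (F : I -> {set T}) :
  #|\bigcup_(i <- r | P i) F i| <= \sum_(i <- r | P i) #|F i|.
Proof.
elim: r => [|i r IH]; first by rewrite !big_nil cards0.
rewrite !big_cons; case: (P i) => //.
exact: leq_trans (leq_card_setU _ _) (leq_add (leqnn _) IH).
Qed.

Lemma size_leq_card_witnesses (I : eqType) (D : finType) (r : seq I)
    (A : {set D}) (R : I -> D -> bool) :
  uniq r -> (forall i, i \in r -> exists2 a, a \in A & R i a) ->
  (forall i j a, i \in r -> j \in r -> R i a -> R j a -> i = j) ->
  size r <= #|A|.
Proof.
elim: r A => [|i r IH] A //= /andP [ir r_uniq] witness unique.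
have r_sub : {subset r <= i :: r} by move=> j; rewrite inE orbC => ->.
have [a Aa Ria] := witness i (mem_head i r).
rewrite (cardsD1 a) Aa ltnS; apply: IH => // [j jr|j k b /r_sub jr /r_sub kr].
  have [b Ab Rjb] := witness j (r_sub j jr).
  exists b => //; rewrite !inE Ab andbT; apply/eqP => ba.
  by move: ir; rewrite -(unique j i a (r_sub j jr) (mem_head i r)) ?jr // -ba.
exact: unique.
Qed.

Section PathsInGraph.
Variables (T : finType) (e : rel T).
Hypothesis e_sym : symmetric e.

Definition ends (p : seq T) : {set T} :=
  if p is x :: s then [set x; last x s] else set0.

Definition path_nbrs (p : seq T) (u : T) : {set T} :=
  [set y | e u y & [set u; y] \in path_edges p].

Lemma path_edges_nth (x : T) s k :
  k < size s -> [set nth x (x :: s) k; nth x s k] \in path_edges (x :: s).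
Proof.
move=> ks; rewrite inE; apply/hasP; exists (nth x (x :: s) k, nth x s k) => //.
have kz : k < size (zip (x :: s) s) by rewrite size_zip /=; lia.
by have := mem_nth (x, x) kz; rewrite nth_zip_cond kz.
Qed.

Lemma path_nbrs_step x s k : path e x s -> k < size s ->
  nth x s k \in path_nbrs (x :: s) (nth x (x :: s) k) /\
  nth x (x :: s) k \in path_nbrs (x :: s) (nth x s k).
Proof.
move=> /(pathP x) exs ks.
have exk := exs k ks; have pek := path_edges_nth x ks.
by split; rewrite inE ?exk ?pek // e_sym exk setUC pek.
Qed.

Lemma gpath_path_nbrs p u :
  is_gpath e p -> u \in p -> exists y, y \in path_nbrs p u.
Proof.
case: p => [|x s] //= /and3P [xs _ s_gt0] up.
set k := index u (x :: s); have <- : nth x (x :: s) k = u := nth_index x up.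
have ks1 : k < (size s).+1 by rewrite -[(size s).+1]/(size (x :: s)) index_mem.
have [ks|sk] := ltnP k (size s).
  by exists (nth x s k); case: (path_nbrs_step xs ks).
have js : (size s).-1 < size s by lia.
have -> : k = (size s).-1.+1 by lia.
by exists (nth x (x :: s) (size s).-1); case: (path_nbrs_step xs js).
Qed.

Lemma gpath_has_edge p : is_gpath e p -> exists E, E \in path_edges p.
Proof.
case: p => [|x s] // gp; have [y] := gpath_path_nbrs gp (mem_head x s).
by rewrite inE => /andP [_ E]; exists [set x; y].
Qed.

Lemma inner_path_nbrs p u : is_gpath e p -> u \in p -> u \notin ends p ->
  1 < #|path_nbrs p u|.
Proof.
case: p => [|x s] //= /and3P [xs xs_uniq _] up; rewrite !inE negb_or.
set k := index u (x :: s); have <- : nth x (x :: s) k = u := nth_index x up.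
have ks1 : k < (size s).+1 by rewrite -[(size s).+1]/(size (x :: s)) index_mem.
case/andP=> ux ul.
have k_gt0 : 0 < k by apply: contraNT ux; rewrite -eqn0Ngt => /eqP ->.
have ks : k < size s.
  rewrite ltn_neqAle -ltnS ks1 andbT; apply: contraNneq ul => ->.
  by rewrite -[size s]/((size (x :: s)).-1) nth_last.
have [succ _] := path_nbrs_step xs ks.
have js : k.-1 < size s by lia.
have [_ pred] := path_nbrs_step xs js.
rewrite -[nth x s k.-1]/(nth x (x :: s) k.-1.+1) prednK // in pred.
pose nbrs2 := [set nth x (x :: s) k.-1; nth x s k].
apply: leq_trans (subset_leq_card (_ : nbrs2 \subset _)).
  rewrite cards2 -[nth x s k]/(nth x (x :: s) k.+1) nth_uniq //=; lia.
by apply/subsetP => y; rewrite in_set2 => /orP [] /eqP ->.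
Qed.

Lemma between_sym (p : seq T) u v w : between p u v w = between p v u w.
Proof. by rewrite /between minnC maxnC. Qed.

Lemma between_neq (p : seq T) u v w : between p u v w -> (w != u) && (w != v).
Proof.
case/and3P=> _ lo hi; apply/andP.
by split; apply/eqP => wE; move: lo hi; rewrite wE; lia.
Qed.

Lemma gpath_edge_or_between p u v :
  is_gpath e p -> u \in p -> v \in p -> u != v ->
  [set u; v] \in path_edges p \/ exists2 w, e u w || e v w & between p u v w.
Proof.
move=> gp; wlog uv : u v / index u p < index v p.
  move=> W up vp u_neq_v; case: (ltngtP (index u p) (index v p)) => [uv|vu|uvE].
  - exact: W.
  - rewrite eq_sym in u_neq_v; have [vuE|[w evw bw]] := W v u vu vp up u_neq_v.
      by left; rewrite setUC.
    by right; exists w; [rewrite orbC | rewrite between_sym].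
  - by move: u_neq_v; rewrite (index_inj u up vp uvE) eqxx.
case: p gp uv => [|x s] // /and3P [xs xs_uniq _] uv up vp _.
set a := index u (x :: s) in uv; set b := index v (x :: s) in uv.
have bs : b < (size s).+1 by rewrite -[(size s).+1]/(size (x :: s)) index_mem.
have a_lt : a < size s by lia.
have [/[!inE]/andP [eu pe] _] := path_nbrs_step xs a_lt.
rewrite nth_index // in eu pe.
have [ba|ba] := eqVneq b a.+1.
  by left; rewrite -(nth_index x vp) -/b ba.
right; exists (nth x s a); first by rewrite eu.
rewrite /between -[nth x s a]/(nth x (x :: s) a.+1).
by rewrite index_uniq // ?mem_nth -/a -/b //; lia.
Qed.

Lemma closed_nbhdS (A B : {set T}) :
  A \subset B -> closed_nbhd e A \subset closed_nbhd e B.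
Proof.
move=> /subsetP AB; apply/subsetP => x.
rewrite !inE => /existsP [v /andP [vA xv]].
by apply/existsP; exists v; rewrite AB.
Qed.

Lemma mem_closed_nbhd (A : {set T}) v x :
  v \in A -> (x == v) || e v x -> x \in closed_nbhd e A.
Proof. by move=> vA xv; rewrite inE; apply/existsP; exists v; rewrite vA. Qed.

Lemma card_closed_nbhd (A : {set T}) :
  #|closed_nbhd e A| <= \sum_(v in A) (deg e v).+1.
Proof.
have sub : closed_nbhd e A \subset \bigcup_(v in A) (v |: [set y | e v y]).
  apply/subsetP => x; rewrite inE => /existsP [v /andP [vA xv]].
  by apply/bigcupP; exists v; rewrite // !inE.
apply: leq_trans (subset_leq_card sub) (leq_trans (leq_card_bigcup _ _ _) _).
by apply: leq_sum => v _; rewrite cardsU1 /deg; case: (v \in _).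
Qed.

Lemma inner_shared_V4 p q u :
  is_gpath e p -> is_gpath e q -> [disjoint path_edges p & path_edges q] ->
  u \in p -> u \in q -> u \notin ends p -> u \notin ends q -> u \in V4 e.
Proof.
move=> gp gq pq up uq u_inner_p u_inner_q.
have nbrs_disj : path_nbrs p u :&: path_nbrs q u = set0.
  have nbr_edge r y : y \in path_nbrs r u -> [set u; y] \in path_edges r.
    by rewrite inE => /andP [].
  apply/setP => y; rewrite inE [y \in set0]inE; apply/negbTE/andP => -[py qy].
  by move: (disjointFr pq (nbr_edge _ _ py)); rewrite (nbr_edge _ _ qy).
rewrite inE /deg.
pose nbrs_pq := path_nbrs p u :|: path_nbrs q u.
apply: leq_trans (subset_leq_card (_ : nbrs_pq \subset _)).
  rewrite cardsU nbrs_disj cards0 subn0.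
  exact: leq_add (inner_path_nbrs gp up u_inner_p)
                 (inner_path_nbrs gq uq u_inner_q).
by apply/subsetP => y; rewrite !inE => /orP [] /andP [].
Qed.

Lemma path_partition_uniq P : path_partition e P -> uniq P.
Proof.
case=> P_gpath P_disj _; apply/(uniqP [::]) => i j iP jP nth_ij.
apply/eqP/negPn/negP => ij; move: (P_disj i j iP jP ij); rewrite nth_ij.
have [E pE] := gpath_has_edge (P_gpath _ (mem_nth [::] jP)).
by move/disjointFr/(_ pE); rewrite pE.
Qed.

Lemma path_partition_disjoint P p q : path_partition e P ->
  p \in P -> q \in P -> p != q -> [disjoint path_edges p & path_edges q].
Proof.
case=> _ P_disj _ pP qP pq.
rewrite -(nth_index [::] pP) -(nth_index [::] qP).
apply: P_disj; rewrite ?index_mem //.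
by apply: contra pq => /eqP ipq; rewrite -(nth_index [::] pP) ipq nth_index.
Qed.

Section EdgeDisjointPaths.
Variable Q : seq (seq T).

Definition V4_ends : {set T} := V4 e :|: \bigcup_(p <- Q) ends p.

Lemma ends_sub_V4_ends p : p \in Q -> ends p \subset V4_ends.
Proof.
move=> pQ; rewrite /V4_ends (big_rem p pQ) /=.
exact: subset_trans (subsetUl _ _) (subsetUr _ _).
Qed.

Lemma card_V4_endsD : #|V4_ends :\: V4 e| <= 2 * size Q.
Proof.
have sub : V4_ends :\: V4 e \subset \bigcup_(p <- Q) ends p.
  by apply/subsetP => v; rewrite !inE => /andP [/negbTE ->].
apply: leq_trans (subset_leq_card sub) (leq_trans (leq_card_bigcup _ _ _) _).
have ends_le2 p : #|ends p| <= 2.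
  by case: p => [|x s]; rewrite /= ?cards0 ?cards2 //; case: (_ != _).
apply: (@leq_trans (\sum_(p <- Q) 2)); first exact: leq_sum.
by rewrite big_const_seq count_predT iter_addn_0.
Qed.

Lemma card_closed_nbhd_V4_ends :
  #|closed_nbhd e V4_ends| <= 2 * high e + 8 * size Q.
Proof.
apply: leq_trans (card_closed_nbhd _) _.
rewrite (big_setID (V4 e)) /= (setIidPr (subsetUl _ _)); apply: leq_add.
  by rewrite mulnC /high big_distrl /=; apply: leq_sum => v; rewrite inE; lia.
apply: leq_trans (_ : \sum_(v in V4_ends :\: V4 e) 4 <= _).
  by apply: leq_sum => v; rewrite !inE -ltnNge => /andP [].
by rewrite sum_nat_const; have := card_V4_endsD; lia.
Qed.

Hypothesis Q_gpath : forall p, p \in Q -> is_gpath e p.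
Hypothesis Q_disjoint : forall p q, p \in Q -> q \in Q -> p != q ->
  [disjoint path_edges p & path_edges q].

Lemma shared_vertex_V4_ends p q u :
  p \in Q -> q \in Q -> p != q -> u \in p -> u \in q -> u \in V4_ends.
Proof.
move=> pQ qQ pq up uq.
have [u_ends_p|u_inner_p] := boolP (u \in ends p).
  exact: subsetP (ends_sub_V4_ends pQ) u u_ends_p.
have [u_ends_q|u_inner_q] := boolP (u \in ends q).
  exact: subsetP (ends_sub_V4_ends qQ) u u_ends_q.
by rewrite inE (inner_shared_V4 (Q_gpath pQ) (Q_gpath qQ) (Q_disjoint pQ qQ pq)).
Qed.

Lemma size_leq_high :
  uniq Q -> (forall p, p \in Q -> visits_V4 e p) -> size Q <= high e.
Proof.
move=> Q_uniq Q_V4.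
pose darts := [set vy : T * T | (vy.1 \in V4 e) && e vy.1 vy.2].
have darts_high : #|darts| <= high e.
  have sub : darts \subset \bigcup_(v in V4 e) (pair v @: [set y | e v y]).
    apply/subsetP => -[v y]; rewrite inE => /andP [vV4 evy].
    by apply/bigcupP; exists v => //; apply/imsetP; exists y; rewrite ?inE.
  apply: leq_trans (subset_leq_card sub) (leq_trans (leq_card_bigcup _ _ _) _).
  by apply: leq_sum => v _; apply: leq_imset_card.
apply: leq_trans darts_high.
pose dart_on p (vy : T * T) := [set vy.1; vy.2] \in path_edges p.
apply: (size_leq_card_witnesses (R := dart_on)) => //.
- move=> p pQ; have /hasP [v vp vV4] := Q_V4 p pQ.
  have [y] := gpath_path_nbrs (Q_gpath pQ) vp; rewrite inE => /andP [evy pe].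
  by exists (v, y); rewrite // inE vV4.
- rewrite /dart_on => p q vy pQ qQ pe qe; apply/eqP/negPn/negP => pq.
  by move: (disjointFr (Q_disjoint pQ qQ pq) pe); rewrite qe.
Qed.

Lemma terminal_collection_V4_ends :
  uniq Q -> terminal_collection e Q (closed_nbhd e V4_ends).
Proof.
move=> Q_uniq; split.
- exact/closed_nbhdS/subsetUl.
- case=> [|x s] // pQ /=; have endsP := subsetP (ends_sub_V4_ends pQ).
  have closed_nbhd_ends y : y \in ends (x :: s) -> y \in closed_nbhd e V4_ends.
    by move=> y_ends; apply: (mem_closed_nbhd (endsP y y_ends)); rewrite eqxx.
  by rewrite !closed_nbhd_ends // !inE eqxx ?orbT.
move=> u v _ _ uv i j iQ jQ ij /=; set p := nth [::] Q i; set q := nth [::] Q j.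
case/and4P=> up vp uq vq.
have pQ : p \in Q := mem_nth [::] iQ; have qQ : q \in Q := mem_nth [::] jQ.
have pq : p != q by rewrite nth_uniq.
have uS : u \in V4_ends := shared_vertex_V4_ends pQ qQ pq up uq.
have vS : v \in V4_ends := shared_vertex_V4_ends pQ qQ pq vp vq.
have near_uv w : e u w || e v w -> w \in closed_nbhd e V4_ends.
  case/orP=> [euw|evw].
    by apply: (mem_closed_nbhd uS); rewrite euw orbT.
  by apply: (mem_closed_nbhd vS); rewrite evw orbT.
have [pe|[w uvw puvw]] := gpath_edge_or_between (Q_gpath pQ) up vp uv; last first.
  by exists w; rewrite ?near_uv // puvw andbT (between_neq puvw).
have [qe|[w uvw quvw]] := gpath_edge_or_between (Q_gpath qQ) uq vq uv; last first.
  by exists w; rewrite ?near_uv // quvw orbT andbT (between_neq quvw).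
by move: (disjointFr (Q_disjoint pQ qQ pq) pe); rewrite qe.
Qed.

End EdgeDisjointPaths.

End PathsInGraph.

Theorem lemma13 (T : finType) (e : rel T) :
  simple_graph e -> nice e ->
  forall P : seq (seq T), path_partition e P ->
  exists U : {set T},
    terminal_collection e [seq p <- P | visits_V4 e p] U /\
    #|U| <= 16 * high e.
Proof.
move=> [e_sym _] _ P partP; set Q := [seq p <- P | visits_V4 e p].
have Q_sub : {subset Q <= P} by move=> p; rewrite mem_filter => /andP [].
have Q_V4 p : p \in Q -> visits_V4 e p by rewrite mem_filter => /andP [].
have Q_uniq : uniq Q := filter_uniq _ (path_partition_uniq e_sym partP).
have Q_gpath p : p \in Q -> is_gpath e p.
  by case: partP => P_gpath _ _ /Q_sub/P_gpath.
have Q_disjoint p q : p \in Q -> q \in Q -> p != q ->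
    [disjoint path_edges p & path_edges q].
  by move=> /Q_sub pP /Q_sub qP; apply: path_partition_disjoint partP pP qP.
exists (closed_nbhd e (V4_ends e Q)); split.
  exact: terminal_collection_V4_ends Q_gpath Q_disjoint Q_uniq.
have := card_closed_nbhd_V4_ends e Q.
have := size_leq_high e_sym Q_gpath Q_disjoint Q_uniq Q_V4.
lia.
Qed.
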